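(* Let $N\ge1$, constants $\kappa,\epsilon,\sigma_B,\sigma_E,G,\Upsilon>0$, and $p_{1,B}\ge p_{2,B}\ge\dots\ge p_{N,B}>0$ (sorted in descending order). Consider the binary program $$\max_{\boldsymbol a\in\{0,1\}^N}\ \sum_{n=1}^N a_np_{n,B}\quad\text{s.t.}\quad \frac{2\kappa a_np_{n,B}}{\sqrt{\sigma_B}}\le\epsilon\ \ \forall n,\qquad \frac{G\sqrt{\sigma_E}}{\big(\sum_{n=1}^N a_n\big)\max_n\{a_np_{n,B}\}}\ge\sqrt{\Upsilon}.$$ Assume $p_{i,B}$ is the largest entry of $(p_{1,B},\dots,p_{N,B})$ satisfying $\frac{2\kappa p_{i,B}}{\sqrt{\sigma_B}}\le\epsilon$. For $1\le x\le N-i+1$ let $K_x=\min\big\{N-i-x+2,\ \big\lfloor\frac{G\sqrt{\sigma_E}}{p_{i+x-1,B}\sqrt{\Upsilon}}\big\rfloor\big\}$ and define $\boldsymbol a^x\in\{0,1\}^N$ by $[\boldsymbol a^x]_n=1$ if $i+x-1\le n\le i+x+K_x-2$ and $[\boldsymbol a^x]_n=0$ otherwise. Then the only candidates for a globally optimal solution of the program are the $N-i+1$ vectors $\boldsymbol a^1,\dots,\boldsymbol a^{N-i+1}$.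
   Context: This program arises in the paper as the high-model-dimension ($d\to\infty$) limit of a device-selection problem: $a_n=1$ means device $n$ uploads its gradient, $a_n=0$ means it acts as a jammer; $p_{n,B}$ is channel gain times square root of power budget, $\kappa=\sqrt{2\ln(1.25/\zeta)}$ is a privacy constant, $\epsilon$ a differential-privacy level, $\Upsilon$ a security requirement, $\sigma_B,\sigma_E$ noise variances at the server and eavesdropper, and $G$ a gradient-norm bound. *)

From HB Require Import structures.
From mathcomp Require Import all_boot all_order all_algebra.
From mathcomp Require Import all_reals.
Set Implicit Arguments. Unset Strict Implicit. Unset Printing Implicit Defensive.
Import Order.TTheory GRing.Theory Num.Theory.
Local Open Scope ring_scope.

Section Prog.
Variables (R : realType) (N : nat).
(* p n is p_{n,B} for 1 <= n <= N; a vector a in {0,1}^N is a : 'I_N -> bool,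
   a j is the entry a_{j+1}. *)
Variables (kappa eps sB sE G Ups : R) (p : nat -> R).

Definition ent (a : 'I_N -> bool) (j : 'I_N) : R := (a j)%:R * p j.+1.

Definition objective (a : 'I_N -> bool) : R := \sum_(j < N) ent a j.

Definition maxap (a : 'I_N -> bool) : R := \big[Num.max/0]_(j < N) ent a j.

Definition nsel (a : 'I_N -> bool) : R := (\sum_(j < N) (a j : nat))%:R.

(* Feasibility. The security constraint G sqrt(sE) / (sum a * max a p) >= sqrt Ups
   is read with the convention that a zero denominator gives +oo (constraint holds). *)
Definition feasible (a : 'I_N -> bool) : Prop :=
  (forall j : 'I_N, 2 * kappa * ent a j / Num.sqrt sB <= eps) /\
  (nsel a * maxap a = 0 \/
   Num.sqrt Ups <= G * Num.sqrt sE / (nsel a * maxap a)).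

Definition optimal (a : 'I_N -> bool) : Prop :=
  feasible a /\ forall b, feasible b -> objective b <= objective a.

Definition Kx (i x : nat) : nat :=
  minn (N + 2 - (i + x))
       `|Num.floor (G * Num.sqrt sE / (p (i + x - 1)%N * Num.sqrt Ups))|%N.

Definition cand (i x : nat) : 'I_N -> bool :=
  fun j => (i + x - 1 <= j.+1)%N && (j.+1 <= i + x + Kx i x - 2)%N.
End Prog.

From Pilot Require Import Defs.
From HB Require Import structures.
From mathcomp Require Import all_boot all_order all_algebra.
From mathcomp Require Import all_reals.
From mathcomp Require Import ring lra zify.
Set Implicit Arguments.
Unset Strict Implicit.
Unset Printing Implicit Defensive.
Import Order.TTheory GRing.Theory Num.Theory.
Local Open Scope ring_scope.

(* The privacy constraint forbids every device before i, so an optimal [a]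
   selects devices from some first index f >= i on. The security constraint
   then bounds the number of selected devices by the length K_f of the block
   starting at f, and the block [f, f + K_f) is itself feasible. Since the
   gains are sorted, this block collects the K_f largest gains available from
   f on, so it is at least as good as [a], hence optimal with the same value. *)

Lemma eq0_or_ler_divP (F : numFieldType) (x s c : F) :
  0 <= x -> 0 <= c -> (x = 0 \/ s <= c / x) <-> x * s <= c.
Proof.
rewrite le_eqVlt => /predU1P[<- c_ge0 | x_gt0 _]; first by rewrite mul0r; tauto.
rewrite ler_pdivlMr // mulrC; split => [[x0|//]|]; last by right.
by move: x_gt0; rewrite x0 ltxx.
Qed.

Lemma leq_floor_pdiv (F : archiRealFieldType) (n : nat) (c d : F) :
  0 <= c -> 0 < d -> (n <= `|Num.floor (c / d)|%N)%N = (n%:R * d <= c).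
Proof.
move=> c_ge0 d_gt0; have cd_ge0 : 0 <= c / d by rewrite divr_ge0 // ltW.
by have := truncn_floor (c / d); rewrite cd_ge0 => <-; rewrite truncn_ge_nat // ler_pdivlMr.
Qed.

Section Program.
Variables (R : realType) (N : nat) (kappa eps sB sE G Ups : R) (p : nat -> R).
Hypothesis p_decr : forall n, (1 <= n < N)%N -> p n.+1 <= p n.
Hypothesis p_gt0 : forall n, (1 <= n <= N)%N -> 0 < p n.

Local Notation feasible := (@feasible R N kappa eps sB sE G Ups p).
Local Notation optimal := (@optimal R N kappa eps sB sE G Ups p).
Local Notation objective := (@objective R N p).
Local Notation maxap := (@maxap R N p).
Local Notation ent := (@ent R N p).
Implicit Types (a b : 'I_N -> bool).

Definition nsel_nat (a : 'I_N -> bool) : nat := \sum_(j < N) (a j : nat).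

Definition block (f K : nat) : 'I_N -> bool := fun j => (f <= j.+1 < f + K)%N.

Definition block_len (f : nat) : nat :=
  minn (N + 1 - f) `|Num.floor (G * Num.sqrt sE / (p f * Num.sqrt Ups))|%N.

Lemma optimal_of_ge a b :
  optimal a -> feasible b -> objective a <= objective b ->
  optimal b /\ objective b = objective a.
Proof.
move=> [feas_a a_max] feas_b le_ab; have le_ba := a_max b feas_b.
split; last exact: le_anti (andb_true_intro (conj le_ba le_ab)).
by split=> // c /a_max /le_trans; apply.
Qed.

Lemma cand_block i f :
  (1 <= i <= f)%N -> @cand R N sE G Ups p i (f.+1 - i) = block f (block_len f).
Proof.
move=> /andP[i_ge1 le_if]; apply: boolp.funext => j.
rewrite /cand /Kx /block /block_len subnKC ?(leq_trans le_if) // subn1 /=.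
have -> : (N + 2 - f.+1 = N + 1 - f)%N by lia.
by congr (_ && _); apply/idP/idP; lia.
Qed.

Lemma p_anti m n : (1 <= m <= n)%N -> (n <= N)%N -> p n <= p m.
Proof.
move=> /andP[m_ge1]; elim: n => [|n IHn]; first by rewrite leqn0 => /eqP ->.
rewrite leq_eqVlt => /predU1P[-> // | lt_mn] lt_nN.
by apply: le_trans (p_decr _) (IHn _ _); lia.
Qed.

Lemma nsel_block f K : (1 <= f)%N -> (f + K <= N + 1)%N -> nsel_nat (block f K) = K.
Proof.
move=> f_ge1 fK_le; rewrite /nsel_nat /block.
rewrite -(big_mkord xpredT (fun j => nat_of_bool (f <= j.+1 < f + K)%N)).
rewrite (@big_cat_nat _ _ _ f.-1) //=; last by lia.
rewrite (@big_cat_nat _ _ _ (f.-1 + K) f.-1) //=; [|lia|lia].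
rewrite big_nat_cond big1 => [|j /andP[/andP[_ lt_j] _]]; last by case: andP => // -[]; lia.
rewrite [X in (_ + (_ + X))%N]big_nat_cond [X in (_ + (_ + X))%N]big1;
  last by move=> j /andP[/andP[le_j _] _]; case: andP => // -[]; lia.
rewrite (eq_big_nat _ _ (F2 := fun=> 1%N)); last first.
  by move=> j /andP[le_j lt_j]; case: andP => // -[]; split; lia.
by rewrite sum_nat_const_nat; lia.
Qed.

Lemma maxap_ge0 a : 0 <= maxap a.
Proof. exact: bigmax_ge_id. Qed.

Lemma le_maxap a (j : 'I_N) : a j -> p j.+1 <= maxap a.
Proof. by move=> aj; have := le_bigmax 0 (ent a) j; rewrite /ent aj mul1r. Qed.

Lemma maxap_le a c :
  0 <= c -> (forall j : 'I_N, a j -> p j.+1 <= c) -> maxap a <= c.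
Proof.
move=> c_ge0 le_c; apply: bigmax_le => // j _; rewrite /ent.
by case: (boolP (a j)) => [/le_c|_]; rewrite ?mul1r ?mul0r.
Qed.

Lemma objective_ge0 a : 0 <= objective a.
Proof. by apply: sumr_ge0 => j _; rewrite mulr_ge0 // ltW // p_gt0 //= ltn_ord. Qed.

Lemma objective_le_block a f K :
  (1 <= f)%N -> (1 <= K)%N -> (f + K <= N + 1)%N ->
  (forall j : 'I_N, a j -> (f <= j.+1)%N) -> (nsel_nat a <= K)%N ->
  objective a <= objective (block f K).
Proof.
move=> f_ge1 K_ge1 fK_le sel_ge le_selK; set b := block f K; set t := (f + K - 1)%N.
have p_t : 0 < p t by rewrite p_gt0 //; lia.
(* every entry is compared with the smallest gain p_t taken by the block *)
have entB_le j : ent a j - ent b j <= ((a j)%:R - (b j)%:R) * p t.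
  have lt_jN := ltn_ord j; rewrite /ent /b /block.
  case: (boolP (a j)) => a_j; case: (boolP (_ && _)) => /= [/andP[le_fj lt_jfK] | out_j].
  - lra.
  - suff : p j.+1 <= p t by lra.
    by apply: p_anti => //; move: out_j; rewrite sel_ge //= -leqNgt; lia.
  - suff : p t <= p j.+1 by lra.
    by apply: p_anti => //; lia.
  - lra.
rewrite -subr_le0 /Defs.objective -sumrB; apply: le_trans (ler_sum _ (fun j _ => entB_le j)) _.
rewrite -mulr_suml sumrB -!natr_sum -/(nsel_nat a) -/(nsel_nat b).
by rewrite nsel_block // pmulr_lle0 // subr_le0 ler_nat.
Qed.

Hypotheses (G_gt0 : 0 < G) (sE_gt0 : 0 < sE) (Ups_gt0 : 0 < Ups).
Let sqrtUps_gt0 : 0 < Num.sqrt Ups. Proof. by rewrite sqrtr_gt0. Qed.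
Let GsE_ge0 : 0 <= G * Num.sqrt sE. Proof. by rewrite mulr_ge0 ?sqrtr_ge0 ?ltW. Qed.

Lemma feasibleP a :
  feasible a <->
  (forall j : 'I_N, 2 * kappa * ent a j / Num.sqrt sB <= eps) /\
  (nsel_nat a)%:R * maxap a * Num.sqrt Ups <= G * Num.sqrt sE.
Proof.
have sel_ge0 : 0 <= (nsel_nat a)%:R * maxap a by rewrite mulr_ge0 ?maxap_ge0.
have := eq0_or_ler_divP (Num.sqrt Ups) sel_ge0 GsE_ge0.
by rewrite /Defs.feasible /Defs.nsel -/(nsel_nat a); tauto.
Qed.

Lemma nsel_le_block_len a (j0 : 'I_N) :
  feasible a -> a j0 -> (forall j : 'I_N, a j -> (j0 <= j)%N) ->
  (nsel_nat a <= block_len j0.+1)%N.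
Proof.
move=> /feasibleP[_ secure] a_j0 j0_min; rewrite leq_min; apply/andP; split.
  rewrite -[X in (_ <= X)%N](@nsel_block j0.+1 (N + 1 - j0.+1)) //;
    last by have := ltn_ord j0; lia.
  apply: leq_sum => j _; case: (boolP (a j)) => // /j0_min le_j0j.
  by rewrite /block /= ltnS le_j0j; have := ltn_ord j; lia.
have p_j0 : 0 < p j0.+1 by rewrite p_gt0 //= ltn_ord.
rewrite leq_floor_pdiv ?mulr_gt0 //.
apply: le_trans secure; rewrite mulrA ler_wpM2r ?sqrtr_ge0 //.
by rewrite ler_wpM2l ?ler0n ?le_maxap.
Qed.

Hypotheses (kappa_ge0 : 0 <= kappa) (eps_ge0 : 0 <= eps).
Variable i : nat.
Hypothesis i_ge1 : (1 <= i)%N.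
Hypothesis i_private : 2 * kappa * p i / Num.sqrt sB <= eps.

Lemma private_of_sel_ge a :
  (forall j : 'I_N, a j -> (i <= j.+1)%N) ->
  forall j : 'I_N, 2 * kappa * ent a j / Num.sqrt sB <= eps.
Proof.
move=> sel_ge j; rewrite /ent; case: (boolP (a j)) => [/sel_ge le_ij|_].
  apply: le_trans i_private; rewrite mul1r ler_wpM2r ?invr_ge0 ?sqrtr_ge0 //.
  by rewrite ler_wpM2l ?mulr_ge0 // p_anti ?i_ge1 // ltn_ord.
by rewrite !mul0r mulr0 mul0r.
Qed.

Lemma feasible_block f : (i <= f <= N)%N -> feasible (block f (block_len f)).
Proof.
move=> /andP[le_if le_fN]; set K := block_len f.
move: (leqnn K); rewrite {2}/K /block_len leq_min => /andP[K_room K_floor].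
have p_f : 0 < p f by rewrite p_gt0 // (leq_trans i_ge1).
apply/feasibleP; split.
  by apply: private_of_sel_ge => // j /andP[le_fj _]; apply: leq_trans le_fj.
rewrite nsel_block ?(leq_trans i_ge1) //; last by lia.
have K_secure : K%:R * (p f * Num.sqrt Ups) <= G * Num.sqrt sE.
  by rewrite -leq_floor_pdiv ?mulr_gt0.
apply: le_trans K_secure; rewrite -mulrA ler_wpM2l ?ler0n // ler_wpM2r ?sqrtr_ge0 //.
apply: maxap_le => [|j /andP[le_fj _]]; first exact: ltW.
by rewrite p_anti ?ltn_ord ?(leq_trans i_ge1).
Qed.

Hypothesis lt_i_public : forall n, (1 <= n < i)%N -> eps < 2 * kappa * p n / Num.sqrt sB.

Lemma feasible_sel_ge a (j : 'I_N) : feasible a -> a j -> (i <= j.+1)%N.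
Proof.
move=> /feasibleP[private _] a_j; rewrite leqNgt; apply/negP => lt_ji.
have := private j; rewrite /ent a_j mul1r; apply/negP; rewrite -ltNge.
exact: lt_i_public.
Qed.

Lemma exists_block_ge a :
  (i <= N)%N -> feasible a ->
  exists2 f, (i <= f <= N)%N & objective a <= objective (block f (block_len f)).
Proof.
move=> le_iN feas_a; case: (pickP a) => [j0 a_j0 | no_sel]; last first.
  exists i; first by rewrite leqnn le_iN.
  by rewrite {1}/Defs.objective big1 ?objective_ge0 // => j _; rewrite /ent no_sel mul0r.
case: (arg_minnP (fun j : 'I_N => val j) a_j0) => m a_m m_min.
have lt_mN := ltn_ord m.
exists m.+1; first by rewrite (feasible_sel_ge feas_a a_m).
have le_sel := nsel_le_block_len feas_a a_m m_min.
have sel_ge1 : (1 <= nsel_nat a)%N by rewrite /nsel_nat (bigD1 m) //= a_m.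
have le_len : (block_len m.+1 <= N + 1 - m.+1)%N by exact: geq_minl.
apply: objective_le_block => //; [exact: leq_trans le_sel | lia].
Qed.

End Program.

Theorem lemma6 (R : realType) (N : nat) (kappa eps sB sE G Ups : R)
    (p : nat -> R) (i : nat) :
  (1 <= N)%N ->
  0 < kappa -> 0 < eps -> 0 < sB -> 0 < sE -> 0 < G -> 0 < Ups ->
  (forall n, (1 <= n < N)%N -> p n.+1 <= p n) ->
  (forall n, (1 <= n <= N)%N -> 0 < p n) ->
  (1 <= i <= N)%N ->
  2 * kappa * p i / Num.sqrt sB <= eps ->
  (forall n, (1 <= n < i)%N -> eps < 2 * kappa * p n / Num.sqrt sB) ->
  forall a : 'I_N -> bool,
    @optimal R N kappa eps sB sE G Ups p a ->
    exists x : nat, (1 <= x <= N - i + 1)%N /\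
      @optimal R N kappa eps sB sE G Ups p (@cand R N sE G Ups p i x) /\
      @objective R N p (@cand R N sE G Ups p i x) = @objective R N p a.
Proof.
move=> _ kappa_gt0 eps_gt0 _ sE_gt0 G_gt0 Ups_gt0 p_decr p_gt0 /andP[i_ge1 le_iN]
  i_private lt_i_public a opt_a.
have [f le_ifN le_obj] := exists_block_ge p_decr p_gt0 G_gt0 sE_gt0 Ups_gt0
  (ltW kappa_gt0) (ltW eps_gt0) i_ge1 i_private lt_i_public le_iN opt_a.1.
exists (f.+1 - i)%N; split; first by move: le_ifN => /andP[]; lia.
rewrite cand_block ?i_ge1; last by case/andP: le_ifN.
apply: optimal_of_ge opt_a _ le_obj.
exact: (feasible_block p_decr p_gt0 G_gt0 sE_gt0 Ups_gt0 (ltW kappa_gt0) (ltW eps_gt0)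
  i_ge1 i_private le_ifN).
Qed.
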